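(* Let $W,Q$ be symmetric BIDMCs, $p\in(0,1)$ and $\varepsilon\in[0,1]$. If $p\,\mathrm B(\varepsilon)+(1-p)W\preccurlyeq p\,\mathrm B(\varepsilon)+(1-p)Q$, then $W\preccurlyeq Q$.
   Context: A binary-input discrete memoryless channel (BIDMC) $W$ has input $x$ uniformly distributed on $\{0,1\}$, a discrete output alphabet and transition probabilities $\Pr(y\mid x)$. Its LR-profile is $P_W(\varepsilon)=\Pr\big(\mathcal L_W(y)=\varepsilon/(1-\varepsilon)\big)$, where $\mathcal L_W(\hat y)=\Pr(y=\hat y\mid x=0)/\Pr(y=\hat y\mid x=1)$; $W\cong W'$ if their LR-profiles coincide. $W'\preccurlyeq W$ ($W'$ is a degradation of $W$) if there is a channel $R$ from the output alphabet $\mathcal Y$ of $W$ to that of $W'$ with $\Pr(y'\mid x'=a)=\sum_{y\in\mathcal Y}\Pr(y\mid x=a)R(y'\mid y)$, $a\in\{0,1\}$. $\mathrm B(\varepsilon)$ is the binary symmetric channel with crossover probability $\varepsilon$. For BIDMCs $W_1,W_2$ and $p\in[0,1]$, $pW_1+(1-p)W_2$ is the random switching channel that, with probability $p$ (resp. $1-p$), independently of the input, sends the input through $W_1$ (resp. $W_2$) and outputs the channel output together with the index of the channel used. A BIDMC is symmetric if $P_W(\varepsilon)=P_W(1-\varepsilon)$ for all $\varepsilon\in[0,1]$. *)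

From HB Require Import structures.
From mathcomp Require Import all_boot all_order all_algebra.
From mathcomp Require Import reals.
Set Implicit Arguments. Unset Strict Implicit. Unset Printing Implicit Defensive.
Import Order.TTheory GRing.Theory Num.Theory.
Local Open Scope ring_scope.

(* A binary-input channel with finite output alphabet Y:
   W a y = Pr(y | x = a), input a : bool (false = 0, true = 1). *)
Definition chan (R : realType) (Y : finType) := bool -> Y -> R.

Definition is_bidmc (R : realType) (Y : finType) (W : chan R Y) : Prop :=
  (forall a y, 0 <= W a y) /\ (forall a, \sum_(y : Y) W a y = 1).

Definition is_stoch (R : realType) (Y Y' : finType) (K : Y -> Y' -> R) : Prop :=
  (forall y y', 0 <= K y y') /\ (forall y, \sum_(y' : Y') K y y' = 1).

(* degraded W' W  :=  W' ≼ W  (W' is a degradation of W). *)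
Definition degraded (R : realType) (Y' Y : finType) (W' : chan R Y') (W : chan R Y)
  : Prop :=
  exists K : Y -> Y' -> R, is_stoch K /\
    forall (a : bool) (y' : Y'), W' a y' = \sum_(y : Y) W a y * K y y'.

(* LR-profile: P_W(eps) = Pr(L_W(y) = eps/(1-eps)) with x uniform,
   i.e. the total output probability (W 0 y + W 1 y)/2 of the outputs y of
   positive probability whose likelihood ratio W 0 y / W 1 y (possibly +oo)
   equals eps/(1-eps), i.e. W 0 y / (W 0 y + W 1 y) = eps. *)
Definition lr_profile (R : realType) (Y : finType) (W : chan R Y) (eps : R) : R :=
  \sum_(y : Y | (W false y + W true y != 0) &&
                (W false y / (W false y + W true y) == eps))
     (W false y + W true y) / 2.

Definition symmetric_chan (R : realType) (Y : finType) (W : chan R Y) : Prop :=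
  forall eps : R, 0 <= eps <= 1 -> lr_profile W eps = lr_profile W (1 - eps).

Definition bsc (R : realType) (eps : R) : chan R bool :=
  fun a b => if a == b then 1 - eps else eps.

(* Random switching channel p W1 + (1-p) W2: output is the channel index
   (inl = W1, inr = W2) together with that channel's output. *)
Definition switch_chan (R : realType) (Y1 Y2 : finType) (p : R)
  (W1 : chan R Y1) (W2 : chan R Y2) : chan R (Y1 + Y2)%type :=
  fun a z => match z with
             | inl y => p * W1 a y
             | inr y => (1 - p) * W2 a y
             end.

From HB Require Import structures.
From mathcomp Require Import all_boot all_order all_algebra.
From mathcomp Require Import reals.
From mathcomp Require Import ring lra.
Set Implicit Arguments. Unset Strict Implicit. Unset Printing Implicit Defensive.
Import Order.TTheory GRing.Theory Num.Theory.
Local Open Scope ring_scope.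

(* Split the degrading kernel of the switching channels into blocks, with
   inputs X + Z and outputs X + Y, where X is the output alphabet of the shared
   component. Up to the weights p and 1 - p it says [alpha = alpha A + beta C]
   and [gamma = alpha B + beta D], where alpha, beta, gamma are the rows of the
   shared component, of Q and of W. View (A B; C D) as one step of a Markov
   chain on X + Z absorbed in Y and eliminate the states of X one at a time: a
   state v with A v v < 1 is short-circuited, every transition into v being
   continued by the transitions out of v rescaled by 1/(1 - A v v); a state
   with A v v = 1 receives no mass from alpha or beta, so the transitions into
   it may be redirected to an arbitrary output. Once X is exhausted,
   [gamma = beta D] with D stochastic, and cancelling 1 - p gives W ≼ Q. Neither
   symmetry nor the particular shared channel B(eps) plays any role. *)

Section StateElimination.
Variables (R : realType) (V Y Z : finType).
Variables (alpha : chan R V) (beta : chan R Z) (gamma : chan R Y).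
Hypotheses (alpha_ge0 : forall a v, 0 <= alpha a v) (beta_ge0 : forall a z, 0 <= beta a z).

(* The data of the argument above with X replaced by the states S not yet
   eliminated; rows of A and B outside S are irrelevant. *)
Record elim_system (S : {set V}) (A : V -> V -> R) (B : V -> Y -> R)
    (C : Z -> V -> R) (D : Z -> Y -> R) : Prop := ElimSystem {
  es_A_ge0 : forall u w, 0 <= A u w;
  es_B_ge0 : forall u y, 0 <= B u y;
  es_C_ge0 : forall z w, 0 <= C z w;
  es_D_ge0 : forall z y, 0 <= D z y;
  es_rowV : forall u, u \in S -> \sum_(w in S) A u w + \sum_y B u y = 1;
  es_rowZ : forall z, \sum_(w in S) C z w + \sum_y D z y = 1;
  es_eqV : forall a w, w \in S ->
    alpha a w = \sum_(u in S) alpha a u * A u w + \sum_z beta a z * C z w;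
  es_eqY : forall a y,
    gamma a y = \sum_(u in S) alpha a u * B u y + \sum_z beta a z * D z y }.

Lemma elim_system_set0 A B C D :
  elim_system set0 A B C D -> degraded gamma beta.
Proof.
case=> _ _ _ D0 _ rowZ _ eqY; exists D; split.
  by split=> // z; have := rowZ z; rewrite big_set0 add0r.
by move=> a y; rewrite eqY big_set0 add0r.
Qed.

Section Transient.
Variables (S : {set V}) (v : V) (A : V -> V -> R) (B : V -> Y -> R).
Variables (C : Z -> V -> R) (D : Z -> Y -> R).
Hypotheses (vS : v \in S) (sys : elim_system S A B C D) (Avv_lt1 : A v v < 1).

Let c := (1 - A v v)^-1.

Let c_ge0 : 0 <= c.
Proof. by rewrite invr_ge0 subr_ge0 ltW. Qed.

Let c_inv : (1 - A v v) * c = 1.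
Proof. by rewrite mulfV // subr_eq0 gt_eqF. Qed.

Let alpha_v a :
  alpha a v = (\sum_(u in S :\ v) alpha a u * A u v + \sum_z beta a z * C z v) * c.
Proof.
have := es_eqV sys a vS; rewrite (big_setD1 v vS) /= => eq_v.
by rewrite -[LHS]mulr1 -c_inv mulrA; congr (_ * c); rewrite mulrBr mulr1 {1}eq_v; ring.
Qed.

Let row_short_circuit (r : V -> R) (s : Y -> R) :
  \sum_(w in S) r w + \sum_y s y = 1 ->
  \sum_(w in S :\ v) (r w + r v * (A v w * c)) + \sum_y (s y + r v * (B v y * c)) = 1.
Proof.
rewrite (big_setD1 v vS) /= => row_r.
have := es_rowV sys vS; rewrite (big_setD1 v vS) /= => row_v.
rewrite !big_split /= -!mulr_sumr -!big_distrl /=.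
have -> : \sum_(w in S :\ v) r w + r v * ((\sum_(w in S :\ v) A v w) * c) +
    (\sum_y s y + r v * ((\sum_y B v y) * c)) =
  \sum_(w in S :\ v) r w + \sum_y s y +
    r v * ((\sum_(w in S :\ v) A v w + \sum_y B v y) * c) by ring.
have -> : \sum_(w in S :\ v) A v w + \sum_y B v y = 1 - A v v by lra.
by rewrite c_inv mulr1; lra.
Qed.

Let eq_short_circuit a (F : V -> R) (H : Z -> R) :
  \sum_(u in S) alpha a u * F u + \sum_z beta a z * H z =
  \sum_(u in S :\ v) alpha a u * (F u + A u v * (F v * c)) +
  \sum_z beta a z * (H z + C z v * (F v * c)).
Proof.
rewrite (big_setD1 v vS) /= alpha_v.
under [in RHS]eq_bigr do rewrite mulrDr mulrA.
under [X in _ = _ + X]eq_bigr do rewrite mulrDr mulrA.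
rewrite !big_split /= -!big_distrl /=; ring.
Qed.

Lemma elim_system_transient :
  elim_system (S :\ v) (fun u w => A u w + A u v * (A v w * c))
    (fun u y => B u y + A u v * (B v y * c))
    (fun z w => C z w + C z v * (A v w * c))
    (fun z y => D z y + C z v * (B v y * c)).
Proof.
have [A0 B0 C0 D0 rowV rowZ eqV eqY] := sys.
split=> [u w|u y|z w|z y|u|z|a w|a y].
- by rewrite addr_ge0 // !mulr_ge0.
- by rewrite addr_ge0 // !mulr_ge0.
- by rewrite addr_ge0 // !mulr_ge0.
- by rewrite addr_ge0 // !mulr_ge0.
- by rewrite in_setD1 => /andP[_ /rowV /row_short_circuit].
- exact/row_short_circuit/rowZ.
- by rewrite in_setD1 => /andP[_ wS]; rewrite eqV // eq_short_circuit.
- by rewrite eqY eq_short_circuit.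
Qed.

End Transient.

Section Absorbing.
Variables (y0 : Y) (S : {set V}) (v : V) (A : V -> V -> R) (B : V -> Y -> R).
Variables (C : Z -> V -> R) (D : Z -> Y -> R).
Hypotheses (vS : v \in S) (sys : elim_system S A B C D) (Avv_eq1 : A v v = 1).

Let dirac (y : Y) : R := (y == y0)%:R.

Let sum_dirac : \sum_y dirac y = 1.
Proof. by rewrite (bigD1 y0) //= /dirac eqxx big1 ?addr0 // => y /negbTE ->. Qed.

Let row_v_out : (forall w, w \in S :\ v -> A v w = 0) /\ (forall y, B v y = 0).
Proof.
have [A0 B0 _ _ rowV _ _ _] := sys.
have := rowV v vS; rewrite (big_setD1 v vS) /= Avv_eq1 => row_v.
have /eqP : \sum_(w in S :\ v) A v w + \sum_y B v y = 0 by lra.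
rewrite paddr_eq0 ?sumr_ge0 // => /andP[/eqP sumA0 /eqP sumB0].
by split=> [w wS|y]; [apply: (psumr_eq0P _ sumA0) | apply: (psumr_eq0P _ sumB0)].
Qed.

Let inflow_v a :
  \sum_(u in S :\ v) alpha a u * A u v = 0 /\ \sum_z beta a z * C z v = 0.
Proof.
have [A0 _ C0 _ _ _ eqV _] := sys.
have := eqV a v vS; rewrite (big_setD1 v vS) /= Avv_eq1 mulr1 => eq_v.
have /eqP : \sum_(u in S :\ v) alpha a u * A u v + \sum_z beta a z * C z v = 0 by lra.
by rewrite paddr_eq0 ?sumr_ge0 // => [/andP[/eqP -> /eqP ->] //|u _|z _];
  rewrite mulr_ge0.
Qed.

Let row_redirect (r : V -> R) (s : Y -> R) :
  \sum_(w in S) r w + \sum_y s y = 1 ->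
  \sum_(w in S :\ v) r w + \sum_y (s y + r v * dirac y) = 1.
Proof.
by rewrite (big_setD1 v vS) /= big_split /= -mulr_sumr sum_dirac mulr1; lra.
Qed.

Lemma elim_system_absorbing :
  elim_system (S :\ v) A (fun u y => B u y + A u v * dirac y) C
    (fun z y => D z y + C z v * dirac y).
Proof.
have [A0 B0 C0 D0 rowV rowZ eqV eqY] := sys.
split=> [//|u y|//|z y|u|z|a w|a y].
- by rewrite addr_ge0 // mulr_ge0.
- by rewrite addr_ge0 // mulr_ge0.
- by rewrite in_setD1 => /andP[_ /rowV /row_redirect].
- exact/row_redirect/rowZ.
- rewrite in_setD1 => /andP[wv wS].
  by rewrite eqV // (big_setD1 v vS) /= row_v_out.1 ?in_setD1 ?wv // mulr0 add0r.
- have [inA inC] := inflow_v a.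
  under eq_bigr do rewrite mulrDr mulrA.
  under [X in _ = _ + X]eq_bigr do rewrite mulrDr mulrA.
  rewrite !big_split /= -!big_distrl /= inA inC !mul0r !addr0.
  by rewrite eqY (big_setD1 v vS) /= row_v_out.2 mulr0 add0r.
Qed.

End Absorbing.

Lemma elim_system_degraded (y0 : Y) S A B C D :
  elim_system S A B C D -> degraded gamma beta.
Proof.
move cardS: #|S| => n; elim: n S cardS A B C D => [|n IH] S cardS A B C D sys.
  by move/cards0_eq: cardS sys => ->; apply: elim_system_set0.
have [v vS] : {v | v \in S} by apply/sigW/card_gt0P; rewrite cardS.
have cardSv : #|S :\ v| = n by move: cardS; rewrite (cardsD1 v) vS => -[].
have [Avv_lt1|Avv_ge1] := ltrP (A v v) 1.
  exact: IH cardSv _ _ _ _ (elim_system_transient vS sys Avv_lt1).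
have Avv_eq1 : A v v = 1.
  have [A0 B0 _ _ rowV _ _ _] := sys.
  have := rowV v vS; rewrite (big_setD1 v vS) /= => row_v.
  have : 0 <= \sum_(w in S :\ v) A v w by rewrite sumr_ge0.
  have : 0 <= \sum_y B v y by rewrite sumr_ge0.
  lra.
exact: IH cardSv _ _ _ _ (elim_system_absorbing y0 vS sys Avv_eq1).
Qed.

End StateElimination.

Lemma degraded_switch_cancel (R : realType) (X Y Z : finType) (y0 : Y)
    (V : chan R X) (W : chan R Y) (Q : chan R Z) (p : R) :
  (forall a x, 0 <= V a x) -> (forall a z, 0 <= Q a z) -> 0 <= p < 1 ->
  degraded (switch_chan p V W) (switch_chan p V Q) -> degraded W Q.
Proof.
move=> V0 Q0 /andP[p0 p1] [K [[K0 K1] HK]].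
have sumT (F : X -> R) : \sum_(x in [set: X]) F x = \sum_x F x.
  by apply: eq_bigl => x; rewrite in_setT.
have q0 : 0 <= 1 - p by rewrite subr_ge0 ltW.
have sys : elim_system (fun a x => p * V a x) (fun a z => (1 - p) * Q a z)
    (fun a y => (1 - p) * W a y) [set: X]
    (fun u w => K (inl u) (inl w)) (fun u y => K (inl u) (inr y))
    (fun z w => K (inr z) (inl w)) (fun z y => K (inr z) (inr y)).
  split=> // [u _|z|a w _|a y]; rewrite sumT.
  - by have := K1 (inl u); rewrite big_sumType.
  - by have := K1 (inr z); rewrite big_sumType.
  - by have := HK a (inl w); rewrite big_sumType.
  - by have := HK a (inr y); rewrite big_sumType.
have [L [stochL HL]] := elim_system_degraded
  (fun a x => mulr_ge0 p0 (V0 a x)) (fun a z => mulr_ge0 q0 (Q0 a z)) y0 sys.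
exists L; split=> // a y.
have q_neq0 : 1 - p != 0 by rewrite subr_eq0 gt_eqF.
apply: (mulfI q_neq0).
by rewrite HL mulr_sumr; apply: eq_bigr => z _; rewrite mulrA.
Qed.

Theorem lemma2 (R : realType) (Y Z : finType) (W : chan R Y) (Q : chan R Z)
  (p eps : R) :
  is_bidmc W -> is_bidmc Q ->
  symmetric_chan W -> symmetric_chan Q ->
  0 < p < 1 -> 0 <= eps <= 1 ->
  degraded (switch_chan p (bsc eps) W) (switch_chan p (bsc eps) Q) ->
  degraded W Q.
Proof.
move=> [_ W1] [Q0 _] _ _ /andP[p0 p1] /andP[e0 e1] deg.
have [y0 _ | Y0] := pickP (@predT Y); last first.
  have : \sum_y W false y = 0 by rewrite big1 // => y; have := Y0 y.
  by rewrite W1 => /eqP; rewrite oner_eq0.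
have bsc_ge0 a b : 0 <= bsc eps a b by rewrite /bsc; case: ifP => _; lra.
have p_range : 0 <= p < 1 by rewrite (ltW p0) p1.
exact (degraded_switch_cancel y0 bsc_ge0 Q0 p_range deg).
Qed.
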